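(* Let $\mathcal{M}=(\mathbf A,\perp,\{\mathsf{t},\mathsf{f}\})$ be an $\mathfrak{N}_w$-model and let $x,y$ be distinct propositional variables. Then $h((x\circ y)\Rightarrow(x\Rightarrow y))\perp\mathsf{f}$ for every homomorphism $h$ from the formula algebra into $\mathbf A$ if and only if $\mathbf A$ is trivial (has exactly one element).
   Context: Formulas are built from variables using binary $\otimes,\circ$ and unary ${}^{*}$; in formulas and algebras, $\varphi\Rightarrow\psi:=(\varphi\circ\psi^{*})^{*}$, $\varphi\Leftrightarrow\psi:=(\varphi\Rightarrow\psi)\otimes(\psi\Rightarrow\varphi)$, $\varphi\not\Leftrightarrow\psi:=(\varphi\Leftrightarrow\psi)^{*}$, $\varphi\not\Leftrightarrow\psi\not\Leftrightarrow\chi:=((\varphi\not\Leftrightarrow\psi)\otimes(\varphi\not\Leftrightarrow\chi))\otimes(\psi\not\Leftrightarrow\chi)$. A weak $\mathcal{N}$-algebra is an algebra $(A,\otimes,\circ,{}^{*})$ of type $(2,2,1)$ with $\otimes,\circ$ commutative, $x^{**}=x$, and $(x\otimes y)\circ z=(x\otimes z)\circ y$. With $\mathsf{t}\ne\mathsf{f}$ symbols not in $A$, $\overline A=A\cup\{\mathsf{t},\mathsf{f}\}$, an $\mathfrak{N}_w$-model is $(\mathbf A,\perp,\{\mathsf{t},\mathsf{f}\})$, $\mathbf A$ a weak $\mathcal{N}$-algebra, $\perp\subseteq\overline A\times\overline A$, such that for all $x,y,z\in A$: (a) $x\perp x^{*}$; (b) $x\perp y^{*}$ and $y\perp x^{*}$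 imply $x=y$; (c) $x\perp y$ iff $x\circ y\perp\mathsf{t}$; (d) $x\perp\mathsf{t}$ iff $x^{*}\perp\mathsf{f}$; (e) $x\perp\mathsf{f}$ and $y\perp\mathsf{f}$ iff $x\otimes y\perp\mathsf{f}$; (f) $(x\circ y^{*})^{*}\perp(x\circ y)^{*}$; (g) $x\perp y$ and $x\perp\mathsf{f}$ imply $y\perp\mathsf{t}$; (h) $(x\not\Leftrightarrow y\not\Leftrightarrow z)\perp((x\Rightarrow y)\Rightarrow((y\Rightarrow z)\Rightarrow(x\Rightarrow z)))^{*}$. *)

(** Weak N-algebras: algebras (A, ⊗, ∘, * ) of type (2,2,1) with nonempty
    carrier (standard convention in universal algebra). *)
Record wNAlg := {
  car :> Type;
  car_inh : inhabited car;
  tens : car -> car -> car;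
  circ : car -> car -> car;
  star : car -> car;
  tens_comm : forall x y, tens x y = tens y x;
  circ_comm : forall x y, circ x y = circ y x;
  star_invol : forall x, star (star x) = x;
  tens_circ_ax : forall x y z, circ (tens x y) z = circ (tens x z) y
}.

Section Ops.
Variable A : wNAlg.
Definition aimp (x y : A) : A := star A (circ A x (star A y)).
Definition aiff (x y : A) : A := tens A (aimp x y) (aimp y x).
Definition anequiv (x y : A) : A := star A (aiff x y).
Definition anequiv3 (x y z : A) : A :=
  tens A (tens A (anequiv x y) (anequiv x z)) (anequiv y z).
End Ops.

Inductive ext (A : Type) : Type :=
| el : A -> ext A
| tv : ext A
| fv : ext A.
Arguments el {A} _.
Arguments tv {A}.
Arguments fv {A}.

Definition Nw_model (A : wNAlg) (perp : ext A -> ext A -> Prop) : Prop :=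
  (forall x : A, perp (el x) (el (star A x))) /\
  (forall x y : A, perp (el x) (el (star A y)) -> perp (el y) (el (star A x)) -> x = y) /\
  (forall x y : A, perp (el x) (el y) <-> perp (el (circ A x y)) tv) /\
  (forall x : A, perp (el x) tv <-> perp (el (star A x)) fv) /\
  (forall x y : A, (perp (el x) fv /\ perp (el y) fv) <-> perp (el (tens A x y)) fv) /\
  (forall x y : A, perp (el (star A (circ A x (star A y)))) (el (star A (circ A x y)))) /\
  (forall x y : A, perp (el x) (el y) -> perp (el x) fv -> perp (el y) tv) /\
  (forall x y z : A,
     perp (el (anequiv3 A x y z))
          (el (star A (aimp A (aimp A x y) (aimp A (aimp A y z) (aimp A x z)))))).

Inductive fm : Type :=
| Var : nat -> fm
| Ftens : fm -> fm -> fm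
| Fcirc : fm -> fm -> fm
| Fstar : fm -> fm.

Definition Fimp (p q : fm) : fm := Fstar (Fcirc p (Fstar q)).

Definition is_hom (A : wNAlg) (h : fm -> A) : Prop :=
  (forall p q, h (Ftens p q) = tens A (h p) (h q)) /\
  (forall p q, h (Fcirc p q) = circ A (h p) (h q)) /\
  (forall p, h (Fstar p) = star A (h p)).

From Stdlib Require Import Arith.

(* If every instance of [(x ∘ y) ⇒ (x ⇒ y)] is orthogonal to f, then axioms (c), (d) give
   [a ∘ b ⊥ a ∘ b*], and together with (f) and (b) this forces [a ∘ b = a ⇒ b].  Then
   [u ∘ w ⊥ f] implies [u = w], and [u ∘ u ⊥ f] always holds since [u ⇒ u ⊥ f] by (a).
   The axiom [(x ⊗ y) ∘ z = (x ⊗ z) ∘ y] now yields [p ⊗ (p ⊗ q) = q]; writing any element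
   as [p ⊗ (p ⊗ (c ∘ c))], axiom (e) makes every element orthogonal to f, so any two
   elements coincide.  Conversely, in a one-element algebra every element is [c ⇒ c]. *)

Section NwModel.

Variable A : wNAlg.
Variable perp : ext A -> ext A -> Prop.
Hypothesis HM : Nw_model A perp.

Lemma perp_star (u : A) : perp (el u) (el (star A u)).
Proof. destruct HM as (Ha & _). apply Ha. Qed.

Lemma eq_of_perp_star (u w : A) :
  perp (el u) (el (star A w)) -> perp (el w) (el (star A u)) -> u = w.
Proof. destruct HM as (_ & Hb & _). apply Hb. Qed.

Lemma perp_iff_star_circ_perp_f (u w : A) :
  perp (el u) (el w) <-> perp (el (star A (circ A u w))) fv.
Proof.
  destruct HM as (_ & _ & Hc & Hd & _).
  rewrite Hc, Hd. reflexivity.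
Qed.

Lemma tens_perp_f_iff (u w : A) :
  perp (el u) fv /\ perp (el w) fv <-> perp (el (tens A u w)) fv.
Proof. destruct HM as (_ & _ & _ & _ & He & _). apply He. Qed.

Lemma aimp_perp_star_circ (u w : A) :
  perp (el (aimp A u w)) (el (star A (circ A u w))).
Proof. destruct HM as (_ & _ & _ & _ & _ & Hf & _). apply Hf. Qed.

Lemma aimp_refl_perp_f (u : A) : perp (el (aimp A u u)) fv.
Proof. apply perp_iff_star_circ_perp_f, perp_star. Qed.

Lemma perp_f_of_trivial (a : A) : (forall b : A, b = a) -> forall u : A, perp (el u) fv.
Proof.
  intros Htriv u.
  rewrite (Htriv u), <- (Htriv (aimp A a a)).
  apply aimp_refl_perp_f.
Qed.

Section CircImpValid.

Hypothesis circ_imp_valid :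
  forall a b : A, perp (el (aimp A (circ A a b) (aimp A a b))) fv.

Lemma circ_perp_circ_star (a b : A) : perp (el (circ A a b)) (el (circ A a (star A b))).
Proof.
  apply perp_iff_star_circ_perp_f.
  rewrite <- (star_invol A (circ A a (star A b))).
  apply circ_imp_valid.
Qed.

Lemma circ_eq_aimp (a b : A) : circ A a b = aimp A a b.
Proof.
  apply eq_of_perp_star.
  - unfold aimp. rewrite star_invol. apply circ_perp_circ_star.
  - apply aimp_perp_star_circ.
Qed.

Lemma eq_of_circ_perp_f (u w : A) : perp (el (circ A u w)) fv -> u = w.
Proof.
  intros Huw.
  apply eq_of_perp_star; apply perp_iff_star_circ_perp_f.
  - change (perp (el (aimp A u w)) fv). rewrite <- circ_eq_aimp. exact Huw.
  - change (perp (el (aimp A w u)) fv). rewrite <- circ_eq_aimp, circ_comm. exact Huw.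
Qed.

Lemma circ_refl_perp_f (u : A) : perp (el (circ A u u)) fv.
Proof. rewrite circ_eq_aimp. apply aimp_refl_perp_f. Qed.

Lemma tens_cancel (p q : A) : tens A p (tens A p q) = q.
Proof.
  apply eq_of_circ_perp_f.
  rewrite <- tens_circ_ax.
  apply circ_refl_perp_f.
Qed.

Lemma all_perp_f (u : A) : perp (el u) fv.
Proof.
  destruct (car_inh A) as [c].
  pose proof (circ_refl_perp_f c) as Hcc.
  rewrite <- (tens_cancel u (circ A c c)) in Hcc.
  apply tens_perp_f_iff in Hcc.
  apply Hcc.
Qed.

Lemma trivial_of_circ_imp_valid : exists a : A, forall b : A, b = a.
Proof.
  destruct (car_inh A) as [c].
  exists c. intros b.
  apply eq_of_circ_perp_f, all_perp_f.
Qed.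

End CircImpValid.

End NwModel.

Fixpoint eval (A : wNAlg) (v : nat -> A) (p : fm) : A :=
  match p with
  | Var n => v n
  | Ftens p q => tens A (eval A v p) (eval A v q)
  | Fcirc p q => circ A (eval A v p) (eval A v q)
  | Fstar p => star A (eval A v p)
  end.

Lemma is_hom_eval (A : wNAlg) (v : nat -> A) : is_hom A (eval A v).
Proof. repeat split. Qed.

Theorem proposition4p12 (A : wNAlg) (perp : ext A -> ext A -> Prop)
  (HM : Nw_model A perp) (x y : nat) (Hxy : x <> y) :
  (forall h : fm -> A, is_hom A h ->
     perp (el (h (Fimp (Fcirc (Var x) (Var y)) (Fimp (Var x) (Var y))))) fv)
  <-> (exists a : A, forall b : A, b = a).
Proof.
  split.
  - intros Hvalid.
    apply (trivial_of_circ_imp_valid A perp HM).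
    intros a b.
    set (v := fun n => if Nat.eqb n x then a else b).
    assert (Hvx : v x = a) by (unfold v; rewrite Nat.eqb_refl; reflexivity).
    assert (Hvy : v y = b)
      by (unfold v; rewrite (proj2 (Nat.eqb_neq y x) (not_eq_sym Hxy)); reflexivity).
    pose proof (Hvalid (eval A v) (is_hom_eval A v)) as Hinst.
    simpl in Hinst. rewrite Hvx, Hvy in Hinst.
    exact Hinst.
  - intros [a Htriv] h _.
    apply (perp_f_of_trivial A perp HM a Htriv).
Qed.
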